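(* Let $K$ be a commutative totally ordered quasi-field of characteristic $1$, and let $P,Q\in K[X_1,\dots,X_n]$. Suppose $x\in K^n$ is a zero of $P$ and that there exists a nonzero $R\in K[X_1,\dots,X_n]$ with $RP=RQ$. Then $x$ is also a zero of $Q$.
   Context: A quasi-field of characteristic $1$ (idempotent semifield) is a commutative semiring $K$ (with additive neutral $0$ and unit $1$) such that $1+1=1$ (hence $x+x=x$ for all $x$) and every nonzero element is invertible for multiplication. It is ordered by $a\le b$ iff $a+b=b$; totally ordered means this order is total, so $a+b=\max(a,b)$. A point $x\in K^n$ is a zero of $P\in K[X_1,\dots,X_n]$ if one can write $P=P_1+P_2$ where $P_1,P_2$ have disjoint sets of monomials and $P_1(x)=P_2(x)$; for totally ordered $K$ this means that $P(x)=0$ or that the maximum of the values of the monomials of $P$ at $x$ is attained by at least two distinct monomials. *)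

From HB Require Import structures.
From mathcomp Require Import all_boot all_order all_algebra.
Set Implicit Arguments. Unset Strict Implicit. Unset Printing Implicit Defensive.
Import GRing.Theory.
Local Open Scope ring_scope.

Definition char1 (K : comNzSemiRingType) : Prop := (1 + 1 = 1 :> K).
Definition nonzero_invertible (K : comNzSemiRingType) : Prop :=
  forall x : K, x <> 0 -> exists y : K, x * y = 1.
Definition idem_le (K : comNzSemiRingType) (a b : K) : Prop := a + b = b.
Definition totally_ordered (K : comNzSemiRingType) : Prop :=
  forall a b : K, idem_le a b \/ idem_le b a.

Definition monom (n : nat) := {ffun 'I_n -> nat}.
Definition monom_add n (a b : monom n) : monom n := [ffun i => a i + b i].

(* polynomials: finite formal sums of terms *)
Definition mpoly (K : comNzSemiRingType) (n : nat) := seq (monom n * K).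

Definition mcoef (K : comNzSemiRingType) n (p : mpoly K n) (m : monom n) : K :=
  \sum_(t <- p | t.1 == m) t.2.

Definition msupp (K : comNzSemiRingType) n (p : mpoly K n) : seq (monom n) :=
  [seq m <- undup (map fst p) | mcoef p m != 0].

Definition mmul (K : comNzSemiRingType) n (p q : mpoly K n) : mpoly K n :=
  [seq (monom_add s.1 t.1, s.2 * t.2) | s <- p, t <- q].

Definition mpoly_eq (K : comNzSemiRingType) n (p q : mpoly K n) : Prop :=
  forall m, mcoef p m = mcoef q m.

Definition mpoly_nonzero (K : comNzSemiRingType) n (p : mpoly K n) : Prop :=
  exists m, mcoef p m <> 0.

Definition meval_mon (K : comNzSemiRingType) n (m : monom n) (x : 'I_n -> K) : K :=
  \prod_(i < n) x i ^+ m i.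

(* x is a zero of P: P = P1 + P2 with disjoint monomial sets and P1(x) = P2(x);
   P1 collects the monomials of P in S, P2 the others. *)
Definition is_zero_of (K : comNzSemiRingType) n (P : mpoly K n) (x : 'I_n -> K) : Prop :=
  exists S : pred (monom n),
    \sum_(m <- msupp P | S m) mcoef P m * meval_mon m x
    = \sum_(m <- msupp P | ~~ S m) mcoef P m * meval_mon m x.

From mathcomp Require Import all_boot all_order all_algebra zify.
From Stdlib Require Import Classical FunctionalExtensionality.
Set Implicit Arguments. Unset Strict Implicit. Unset Printing Implicit Defensive.
Import GRing.Theory.
Local Open Scope ring_scope.

(* A monomial m has a weight wt x m, its total degree in the variables
   where x vanishes; m(x) = 0 iff wt x m > 0.  Substituting 1 for the vanishing
   coordinates gives a point y at which no monomial vanishes.  Order the terms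
   c m of a polynomial by the key (wt x m, c m * m(y)): smaller weight first,
   then larger value.  The
   maximal terms are the "dominant" monomials of c.  Keys are multiplicative
   and cancellable, so dominant monomials of a product are exactly the sums of
   dominant monomials of the factors.  On the other hand, x is a zero of F iff
   either all monomials of F have positive weight (then F(x) = 0), or F has two
   distinct dominant monomials (the maximum of the values is attained twice).
   Both alternatives pass from P to Q through R P = R Q: the first since the
   weight of a dominant monomial is additive; the second because if Q had a
   single dominant monomial b then D(R) + p = D(R) + b for every dominant p of
   P, forcing p = b, as a finite set of exponent vectors cannot be properly
   translated into itself. *)

Section IdempotentOrder.

Variable K : comNzSemiRingType.
Hypothesis hchar : char1 K.
Hypothesis hinv : nonzero_invertible K.
Hypothesis htot : totally_ordered K.
Implicit Types a b c d : K.

Lemma addrr a : a + a = a.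
Proof. by rewrite -{1 2}(mulr1 a) -mulrDr hchar mulr1. Qed.

Lemma idem_le_refl a : idem_le a a.
Proof. exact: addrr. Qed.

Lemma idem_le_trans a b c : idem_le a b -> idem_le b c -> idem_le a c.
Proof. by rewrite /idem_le => Hab Hbc; rewrite -Hbc addrA Hab. Qed.

Lemma idem_le_anti a b : idem_le a b -> idem_le b a -> a = b.
Proof. by rewrite /idem_le => Hab Hba; rewrite -Hba addrC Hab. Qed.

Lemma idem_le0 a : idem_le 0 a.
Proof. exact: add0r. Qed.

Lemma idem_le0_eq a : idem_le a 0 -> a = 0.
Proof. by rewrite /idem_le addr0. Qed.

Lemma idem_le_neq0 a b : idem_le a b -> a <> 0 -> b <> 0.
Proof. by move=> Hab Ha Hb; apply: Ha; apply: idem_le0_eq; rewrite -Hb. Qed.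

Lemma idem_le_addl a b : idem_le a (a + b).
Proof. by rewrite /idem_le addrA addrr. Qed.

Lemma idem_le_addr a b : idem_le b (a + b).
Proof. by rewrite /idem_le addrCA addrr. Qed.

Lemma idem_le_add a b c : idem_le a c -> idem_le b c -> idem_le (a + b) c.
Proof. by rewrite /idem_le => Ha Hb; rewrite -addrA Hb Ha. Qed.

Lemma idem_le_mulr a b c : idem_le a b -> idem_le (a * c) (b * c).
Proof. by rewrite /idem_le => H; rewrite -mulrDl H. Qed.

Lemma idem_le_mul a b c d : idem_le a b -> idem_le c d -> idem_le (a * c) (b * d).
Proof.
move=> Hab Hcd; apply: (idem_le_trans (idem_le_mulr c Hab)).
by rewrite ![b * _]mulrC; apply: idem_le_mulr.
Qed.

Lemma mul_neq0 a b : a <> 0 -> b <> 0 -> a * b <> 0.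
Proof.
move=> Ha Hb Hab; have [z Hz] := hinv Ha; apply: Hb.
by rewrite -(mul1r b) -Hz mulrAC Hab mul0r.
Qed.

Lemma expr_neq0 a k : a <> 0 -> a ^+ k <> 0.
Proof.
move=> Ha; elim: k => [|k IHk]; first by rewrite expr0; apply/eqP; exact: oner_neq0.
by rewrite exprS; apply: mul_neq0.
Qed.

Lemma mulIf_neq0 a b c : c <> 0 -> a * c = b * c -> a = b.
Proof.
move=> Hc H; have [z Hz] := hinv Hc.
by rewrite -(mulr1 a) -(mulr1 b) -Hz !mulrA H.
Qed.

Section Sums.

Variables (I : eqType) (r : seq I) (P : pred I) (F : I -> K).

Lemma idem_le_sum i : i \in r -> P i -> idem_le (F i) (\sum_(j <- r | P j) F j).
Proof.
elim: r => [|j s IHs] //= Hi Pi; rewrite big_cons.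
move: Hi; rewrite in_cons => /orP [/eqP <-|Hi]; first by rewrite Pi; apply: idem_le_addl.
have := IHs Hi Pi; case: (P j) => // H; exact: idem_le_trans H (idem_le_addr _ _).
Qed.

Lemma sum_idem_le c :
  (forall i, i \in r -> P i -> idem_le (F i) c) -> idem_le (\sum_(j <- r | P j) F j) c.
Proof.
elim: r => [|j s IHs] H; first by rewrite big_nil; apply: idem_le0.
rewrite big_cons.
have Hs : idem_le (\sum_(j <- s | P j) F j) c.
  by apply: IHs => i Hi; apply: H; rewrite in_cons Hi orbT.
case Pj: (P j) => //; apply: idem_le_add => //; apply: H => //; exact: mem_head.
Qed.

Lemma sum_eq_max i : i \in r -> P i ->
  (forall j, j \in r -> P j -> idem_le (F j) (F i)) -> \sum_(j <- r | P j) F j = F i.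
Proof.
move=> Hi Pi Hmax; apply: idem_le_anti; first exact: sum_idem_le.
exact: idem_le_sum.
Qed.

Lemma sum_attained :
  \sum_(j <- r | P j) F j = 0 \/
  exists i, [/\ i \in r, P i & \sum_(j <- r | P j) F j = F i].
Proof.
elim: r => [|j s IHs]; first by left; rewrite big_nil.
rewrite big_cons; case Pj: (P j); last first.
  case: IHs => [->|[i [Hi Pi ->]]]; first by left.
  by right; exists i; rewrite in_cons Hi orbT.
case: (htot (F j) (\sum_(j <- s | P j) F j)) => H.
  rewrite H; case: IHs => [E|[i [Hi Pi E]]]; first by left.
  by right; exists i; rewrite in_cons Hi orbT.
by right; exists j; split; rewrite ?mem_head // addrC.
Qed.

End Sums.

Definition key_le (k1 k2 : nat * K) : Prop :=
  (k2.1 <= k1.1)%N /\ (k1.1 = k2.1 -> idem_le k1.2 k2.2).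

Definition key_mul (k1 k2 : nat * K) : nat * K := ((k1.1 + k2.1)%N, k1.2 * k2.2).

Lemma key_le_trans k1 k2 k3 : key_le k1 k2 -> key_le k2 k3 -> key_le k1 k3.
Proof.
case=> [H1 H2] [H3 H4]; split; first exact: leq_trans H3 H1.
move=> E; have E1 : k1.1 = k2.1 by apply/eqP; rewrite eqn_leq H1 E H3.
by apply: idem_le_trans (H2 E1) (H4 _); rewrite -E1.
Qed.

Lemma key_le_total k1 k2 : key_le k1 k2 \/ key_le k2 k1.
Proof.
case: (ltngtP k1.1 k2.1) => H.
- by right; split; [exact: ltnW | move=> E; move: H; rewrite E ltnn].
- by left; split; [exact: ltnW | move=> E; move: H; rewrite E ltnn].
- by case: (htot k1.2 k2.2) => Hk; [left|right]; split; rewrite ?H.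
Qed.

Lemma key_le_anti_weight k1 k2 : key_le k1 k2 -> key_le k2 k1 -> k1.1 = k2.1.
Proof. by case=> H1 _ [H2 _]; apply/eqP; rewrite eqn_leq H1 H2. Qed.

Lemma key_le_mul k1 k2 k3 k4 :
  key_le k1 k2 -> key_le k3 k4 -> key_le (key_mul k1 k3) (key_mul k2 k4).
Proof.
case=> [H1 H2] [H3 H4]; split; first exact: leq_add.
move=> /= E; have E1 : k1.1 = k2.1 by lia.
have E3 : k3.1 = k4.1 by lia.
exact: idem_le_mul (H2 E1) (H4 E3).
Qed.

Lemma key_le_mulIf k1 k2 k3 :
  k3.2 <> 0 -> key_le (key_mul k1 k3) (key_mul k2 k3) -> key_le k1 k2.
Proof.
move=> Hk3 [/= H1 H2]; split; first by rewrite leq_add2r in H1.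
move=> E; have := H2 (congr1 (addn^~ k3.1) E); rewrite /idem_le -mulrDl.
exact: mulIf_neq0.
Qed.

Lemma key_max (T : eqType) (f : T -> nat * K) (s : seq T) :
  s <> [::] -> exists2 m, m \in s & forall m', m' \in s -> key_le (f m') (f m).
Proof.
have key_le_refl k : key_le k k by split=> // _; apply: idem_le_refl.
elim: s => [//|j s IHs] _; case: (eqVneq s [::]) => [->|/eqP Hs].
  by exists j; rewrite ?mem_head // => m'; rewrite inE => /eqP ->.
have [m Hm Hmax] := IHs Hs.
case: (key_le_total (f j) (f m)) => H.
  exists m; first by rewrite in_cons Hm orbT.
  by move=> m'; rewrite in_cons => /orP [/eqP ->|]; last exact: Hmax.
exists j; first exact: mem_head.
by move=> m'; rewrite in_cons => /orP [/eqP ->|/Hmax/key_le_trans]; last exact.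
Qed.

End IdempotentOrder.

Lemma classical_filter (T : eqType) (Pr : T -> Prop) (s : seq T) :
  exists2 s', subseq s' s & forall a, a \in s' <-> a \in s /\ Pr a.
Proof.
elim: s => [|m s [s' Hsub Hmem]]; first by exists [::] => // a; split=> [|[]].
have [Pm|NPm] := classic (Pr m).
- exists (m :: s'); first by rewrite /= eqxx.
  move=> a; rewrite !in_cons; split.
  + case/orP=> [/eqP ->|/Hmem [Ha Pa]]; first by rewrite eqxx.
    by rewrite Ha orbT.
  + by case=> /orP [/eqP ->|Ha] Pa; rewrite ?eqxx //; apply/orP; right; apply/Hmem.
- exists s'; first exact: subseq_trans Hsub (subseq_cons _ _).
  move=> a; rewrite in_cons; split=> [/Hmem [Ha Pa]|[/orP [/eqP Ea|Ha] Pa]].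
  + by rewrite Ha orbT.
  + by case: NPm; rewrite -Ea.
  + exact/Hmem.
Qed.

Section Monomials.

Variable n : nat.
Implicit Types a b m : monom n.

Lemma monom_addC a b : monom_add a b = monom_add b a.
Proof. by apply/ffunP => i; rewrite !ffunE; apply: addnC. Qed.

Lemma monom_addIm b : injective (fun a => monom_add a b).
Proof. by move=> a a' /ffunP H; apply/ffunP => i; move: (H i); rewrite !ffunE => /addIn. Qed.

Lemma meval_monD (K : comNzSemiRingType) (y : 'I_n -> K) a b :
  meval_mon (monom_add a b) y = meval_mon a y * meval_mon b y.
Proof. by rewrite /meval_mon -big_split; apply: eq_bigr => i _; rewrite ffunE exprD. Qed.

(* A nonempty finite set of exponent vectors is translated into itself only by
   the zero vector: summing coordinates, A + b1 and A + b2 have coordinate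
   sums sum(A) + |A| b1 and sum(A) + |A| b2. *)
Lemma translate_subset (A : seq (monom n)) b1 b2 : uniq A -> A <> [::] ->
  {subset [seq monom_add a b1 | a <- A] <= [seq monom_add a b2 | a <- A]} -> b1 = b2.
Proof.
move=> HA HA0 Hsub.
have U1 : uniq [seq monom_add a b1 | a <- A] by rewrite map_inj_uniq //; exact: monom_addIm.
have U2 : uniq [seq monom_add a b2 | a <- A] by rewrite map_inj_uniq //; exact: monom_addIm.
have [_ Heq] := uniq_min_size U1 Hsub (eq_leq (etrans (size_map _ _) (esym (size_map _ _)))).
have Hperm := uniq_perm U1 U2 Heq.
have HsA : (0 < size A)%N by case: (A) HA0.
apply/ffunP => i.
have := @perm_big _ addn 0%N _ _ _ predT (fun u : monom n => u i) Hperm.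
rewrite !big_map; under eq_bigr do rewrite ffunE.
under [in X in _ = X -> _]eq_bigr do rewrite ffunE.
rewrite !big_split /= => /addnI.
by rewrite !big_const_seq !count_predT !iter_addn_0 => /eqP; rewrite eqn_pmul2r // => /eqP.
Qed.

End Monomials.

Section Coefficients.

Variables (K : comNzSemiRingType) (n : nat).
Hypothesis hchar : char1 K.
Hypothesis htot : totally_ordered K.
Implicit Types F P R : mpoly K n.

Lemma mcoef_neq0_mem F m : mcoef F m <> 0 -> m \in map fst F.
Proof.
move=> H; apply/negPn/negP => Hm; apply: H; rewrite /mcoef big1_seq //.
by move=> t /andP [/eqP Ht1 Ht]; case/negP: Hm; rewrite -Ht1; exact: map_f.
Qed.

Lemma mem_msupp F m : (m \in msupp F) = (mcoef F m != 0).
Proof.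
rewrite /msupp mem_filter mem_undup; case H: (mcoef F m == 0) => //=.
by apply/mcoef_neq0_mem/eqP; rewrite H.
Qed.

Lemma idem_le_mcoef F t : t \in F -> idem_le t.2 (mcoef F t.1).
Proof. by move=> Ht; apply: (idem_le_sum hchar (P := fun u => u.1 == t.1)). Qed.

Definition is_product (cA cB cC : monom n -> K) : Prop :=
  (forall a b, idem_le (cA a * cB b) (cC (monom_add a b))) /\
  (forall m, cC m <> 0 -> exists a b, m = monom_add a b /\ cC m = cA a * cB b).

Lemma is_productC cA cB cC : is_product cA cB cC -> is_product cB cA cC.
Proof.
case=> Hle Hattain; split; first by move=> a b; rewrite mulrC monom_addC.
move=> m /Hattain [a [b [-> E]]].
by exists b, a; split; [exact: monom_addC | rewrite E mulrC].
Qed.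

Lemma mmul_coef_ge R P a b :
  idem_le (mcoef R a * mcoef P b) (mcoef (mmul R P) (monom_add a b)).
Proof.
rewrite {1}/mcoef mulr_suml; apply: sum_idem_le => s Hs /eqP Hsa.
rewrite /mcoef mulr_sumr; apply: sum_idem_le => t Ht /eqP Htb.
apply: (idem_le_sum hchar (fun u : monom n * K => u.2)
  (i := (monom_add s.1 t.1, s.2 * t.2)) (P := fun u => u.1 == monom_add a b)).
  exact: (allpairs_f (fun s t => (monom_add s.1 t.1, s.2 * t.2)) Hs Ht).
by rewrite /= Hsa Htb.
Qed.

Lemma mmul_coef_attained R P m : mcoef (mmul R P) m <> 0 ->
  exists a b, m = monom_add a b /\ mcoef (mmul R P) m = mcoef R a * mcoef P b.
Proof.
move=> H; case: (sum_attained htot (mmul R P) (fun u => u.1 == m) (fun u => u.2))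
  => [E|[u [Hu /eqP Pu E]]]; first by case: H; rewrite /mcoef E.
case/allpairsP: Hu => [[s t] [/= Hs Ht Eu]].
exists s.1, t.1; split; first by rewrite -Pu Eu.
apply: idem_le_anti; last by rewrite -Pu Eu; exact: mmul_coef_ge.
by rewrite /mcoef E Eu /=; apply: idem_le_mul; exact: idem_le_mcoef.
Qed.

Lemma is_product_mmul R P : is_product (mcoef R) (mcoef P) (mcoef (mmul R P)).
Proof. by split; [exact: mmul_coef_ge | exact: mmul_coef_attained]. Qed.

End Coefficients.

Section Dominant.

Variables (K : comNzSemiRingType) (n : nat) (x : 'I_n -> K).
Hypothesis hchar : char1 K.
Hypothesis hinv : nonzero_invertible K.
Hypothesis htot : totally_ordered K.
Implicit Types (a b m : monom n) (c cA cB cC : monom n -> K).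

Definition wt m : nat := (\sum_(i < n) (x i == 0%R) * m i)%N.

Definition unzero (i : 'I_n) : K := if x i == 0 then 1 else x i.

Lemma wtD a b : wt (monom_add a b) = (wt a + wt b)%N.
Proof. by rewrite /wt -big_split; apply: eq_bigr => i _; rewrite ffunE mulnDr. Qed.

Lemma meval_unzero_neq0 m : meval_mon m unzero <> 0.
Proof.
have one_neq0 : (1 : K) <> 0 by apply/eqP; exact: oner_neq0.
apply: (big_ind (fun z : K => z <> 0)) => //; first exact: mul_neq0 hinv.
by move=> i _; apply: (expr_neq0 hinv); rewrite /unzero; case: (x i =P 0).
Qed.

Lemma meval_wt m : meval_mon m x = if wt m == 0%N then meval_mon m unzero else 0.
Proof.
case: (pickP (fun i => (x i == 0%R) * m i != 0)%N) => [i Hi | H].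
  have -> : (wt m == 0%N) = false.
    by apply/negbTE; rewrite /wt (bigD1 i) //= addn_eq0 negb_and Hi.
  rewrite /meval_mon (bigD1 i) //=.
  move: Hi; case Ex: (x i == 0) => //; rewrite mul1n => Hm.
  by rewrite (eqP Ex) expr0n (negbTE Hm) mul0r.
have -> : wt m = 0%N by rewrite /wt big1 // => i _; apply/eqP/negbFE/H.
rewrite eqxx /meval_mon; apply: eq_bigr => i _; rewrite /unzero.
by move/negbFE: (H i); case: (x i == 0) => //; rewrite mul1n => /eqP ->; rewrite !expr0.
Qed.

Definition key c m : nat * K := (wt m, c m * meval_mon m unzero).

Definition dominant c m : Prop :=
  c m <> 0 /\ forall m', c m' <> 0 -> key_le (key c m') (key c m).

Lemma term_wt0 c m : wt m = 0%N -> c m * meval_mon m x = (key c m).2.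
Proof. by move=> H; rewrite meval_wt H eqxx. Qed.

Lemma term_wt_gt0 c m : (0 < wt m)%N -> c m * meval_mon m x = 0.
Proof. by move=> H; rewrite meval_wt (negbTE (lt0n_neq0 H)) mulr0. Qed.

Lemma dominant_wt_eq c a a' : dominant c a -> dominant c a' -> wt a = wt a'.
Proof. by case=> Ha Hamax [Ha' Ha'max]; apply: key_le_anti_weight (Ha'max _ Ha) (Hamax _ Ha'). Qed.

Lemma dominant_wt_le c b m : dominant c b -> c m <> 0 -> (wt b <= wt m)%N.
Proof. by case=> _ Hmax /Hmax []. Qed.

Lemma dominant_exists (F : mpoly K n) : mpoly_nonzero F -> exists m, dominant (mcoef F) m.
Proof.
case=> m0 Hm0; set s := [seq m <- map fst F | mcoef F m != 0].
have mem_s m : (m \in s) <-> mcoef F m <> 0.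
  rewrite mem_filter; split => [/andP [/eqP //]|Hm].
  by rewrite mcoef_neq0_mem // andbT; apply/eqP.
have Hs : s <> [::] by move=> Es; have /mem_s := Hm0; rewrite Es.
have [m /mem_s Hm Hmax] := key_max hchar htot (key (mcoef F)) Hs.
by exists m; split => // m' /mem_s; apply: Hmax.
Qed.

Lemma key_mul_le cA cB cC a b : is_product cA cB cC ->
  key_le (key_mul (key cA a) (key cB b)) (key cC (monom_add a b)).
Proof.
case=> Hle _; split; rewrite /= wtD ?leqnn // => _.
by rewrite meval_monD mulrACA; apply: idem_le_mulr.
Qed.

Lemma key_mul_eq cA cB cC a b : cC (monom_add a b) = cA a * cB b ->
  key cC (monom_add a b) = key_mul (key cA a) (key cB b).
Proof. by move=> E; rewrite /key /key_mul /= wtD meval_monD E mulrACA. Qed.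

Lemma dominantD cA cB cC a b : is_product cA cB cC ->
  dominant cA a -> dominant cB b -> dominant cC (monom_add a b).
Proof.
move=> Hprod [Ha Hamax] [Hb Hbmax]; split.
  exact: idem_le_neq0 (Hprod.1 a b) (mul_neq0 hinv Ha Hb).
move=> m' /[dup] Hm' /Hprod.2 [a' [b' [Em' E]]].
have Ha' : cA a' <> 0 by move=> H; apply: Hm'; rewrite E H mul0r.
have Hb' : cB b' <> 0 by move=> H; apply: Hm'; rewrite E H mulr0.
rewrite Em' (@key_mul_eq cA cB) -?Em' //.
exact: key_le_trans (key_le_mul (Hamax _ Ha') (Hbmax _ Hb')) (key_mul_le _ _ Hprod).
Qed.

(* A factor of a dominant monomial, at which its coefficient is attained,
   is dominant: keys are cancellable. *)
Lemma dominant_factor cA cB cC a b : is_product cA cB cC ->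
  dominant cC (monom_add a b) -> cC (monom_add a b) = cA a * cB b -> dominant cA a.
Proof.
move=> Hprod [Hm Hmmax] E.
have Ha : cA a <> 0 by move=> H; apply: Hm; rewrite E H mul0r.
have Hb : cB b <> 0 by move=> H; apply: Hm; rewrite E H mulr0.
split => // a' Ha'.
have Hle := Hmmax (monom_add a' b) (idem_le_neq0 (Hprod.1 a' b) (mul_neq0 hinv Ha' Hb)).
rewrite (key_mul_eq E) in Hle.
apply: (key_le_mulIf hinv (k3 := key cB b)).
  by rewrite /=; apply: (mul_neq0 hinv Hb); apply: meval_unzero_neq0.
exact: key_le_trans (key_mul_le _ _ Hprod) Hle.
Qed.

Lemma dominant_split cA cB cC m : is_product cA cB cC -> dominant cC m ->
  exists a b, [/\ m = monom_add a b, dominant cA a & dominant cB b].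
Proof.
move=> Hprod Hdom; have [a [b [Em E]]] := Hprod.2 m Hdom.1; subst m.
exists a, b; split => //; first exact: dominant_factor Hprod Hdom E.
apply: (dominant_factor (b := a) (is_productC Hprod)); first by rewrite monom_addC.
by rewrite monom_addC E mulrC.
Qed.

End Dominant.

Section Zeros.

Variables (K : comNzSemiRingType) (n : nat) (x : 'I_n -> K).
Hypothesis hchar : char1 K.
Hypothesis hinv : nonzero_invertible K.
Hypothesis htot : totally_ordered K.
Implicit Types (c : monom n -> K) (F : mpoly K n).

Definition positive_weights c : Prop := forall m, c m <> 0 -> (0 < wt x m)%N.

Definition two_dominants c : Prop :=
  exists m1 m2, [/\ m1 <> m2, dominant x c m1 & dominant x c m2].

Local Notation term F m := (mcoef F m * meval_mon m x).

Lemma dominant_term_max F m : dominant x (mcoef F) m -> wt x m = 0%N ->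
  forall m', m' \in msupp F -> idem_le (term F m') (term F m).
Proof.
move=> [_ Hmax] Hw m'; rewrite mem_msupp => /eqP Hm'.
case: (posnP (wt x m')) => Hw'; last by rewrite term_wt_gt0 //; apply: idem_le0.
by rewrite !term_wt0 //; case: (Hmax _ Hm') => _; apply; rewrite /= Hw Hw'.
Qed.

Lemma max_term_dominant F m : term F m <> 0 ->
  (forall m', m' \in msupp F -> idem_le (term F m') (term F m)) -> dominant x (mcoef F) m.
Proof.
move=> Hm Hmax; have Hw : wt x m = 0%N.
  by case: (posnP (wt x m)) => // /term_wt_gt0 Hw; case: Hm; apply: Hw.
split=> [Hc|m' Hm']; first by apply: Hm; rewrite Hc mul0r.
split; first by rewrite /= Hw.
move=> /= Ew; have Hw' : wt x m' = 0%N by rewrite Ew.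
have Hm's : m' \in msupp F by rewrite mem_msupp; apply/eqP.
by have := Hmax m' Hm's; rewrite (term_wt0 _ Hw) (term_wt0 _ Hw').
Qed.

Lemma zero_of_positive_weights F : positive_weights (mcoef F) -> is_zero_of F x.
Proof.
move=> Hpos; exists predT; rewrite !big1_seq // => m /andP [_].
all: by rewrite mem_msupp => /eqP /Hpos; apply: term_wt_gt0.
Qed.

Lemma zero_of_two_dominants F : two_dominants (mcoef F) -> is_zero_of F x.
Proof.
case=> m1 [m2 [Hne D1 D2]].
case: (posnP (wt x m1)) => Hw1; last first.
  by apply: zero_of_positive_weights => m Hm; exact: leq_trans Hw1 (dominant_wt_le D1 Hm).
have Hw2 : wt x m2 = 0%N by rewrite -(dominant_wt_eq D1 D2).
have Hmax1 := dominant_term_max D1 Hw1.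
have Hmax2 := dominant_term_max D2 Hw2.
have Hm1 : m1 \in msupp F by rewrite mem_msupp; apply/eqP; case: D1.
have Hm2 : m2 \in msupp F by rewrite mem_msupp; apply/eqP; case: D2.
have E12 : term F m1 = term F m2 by apply: idem_le_anti; [apply: Hmax2 | apply: Hmax1].
have sum_m1 : \sum_(m <- msupp F | m == m1) term F m = term F m1.
  by apply: (sum_eq_max hchar Hm1) => // m _ /eqP ->; apply: idem_le_refl.
have sum_others : \sum_(m <- msupp F | m != m1) term F m = term F m2.
  apply: (sum_eq_max hchar Hm2); first by apply/eqP => E; apply: Hne.
  by move=> m Hm _; rewrite -E12; apply: Hmax1.
by exists (fun m => m == m1); rewrite sum_m1 sum_others.
Qed.

Lemma zero_ofP F : is_zero_of F x <-> positive_weights (mcoef F) \/ two_dominants (mcoef F).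
Proof.
split; last by case; [exact: zero_of_positive_weights | exact: zero_of_two_dominants].
case=> S E; set L := \sum_(m <- msupp F | S m) term F m in E.
have Hle m : m \in msupp F -> idem_le (term F m) L.
  move=> Hm; case Sm: (S m); first exact: (idem_le_sum hchar (fun m => term F m)).
  by rewrite E; apply: (idem_le_sum hchar (fun m => term F m)); rewrite // Sm.
have [L0|/eqP Lneq0] := eqVneq L 0.
  left => m Hm; have Hms : m \in msupp F by rewrite mem_msupp; apply/eqP.
  case: (posnP (wt x m)) => // Hw; have := Hle m Hms.
  rewrite L0 (term_wt0 _ Hw) /= => /idem_le0_eq.
  by move/(mul_neq0 hinv Hm (meval_unzero_neq0 hinv (m := m))).
right; have Hdom m : m \in msupp F -> term F m = L -> dominant x (mcoef F) m.
  by move=> _ HmL; apply: max_term_dominant; rewrite HmL.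
case: (sum_attained htot (msupp F) S (fun m => term F m)) => [//|[m1 [Hm1 S1 E1]]].
case: (sum_attained htot (msupp F) (predC S) (fun m => term F m)) => [H0|[m2 [Hm2 S2 E2]]].
  by case: Lneq0; rewrite E.
exists m1, m2; split; first by move=> E12; move: S2; rewrite /= -E12 S1.
  exact: Hdom Hm1 (esym E1).
by apply: Hdom Hm2 _; rewrite -E2 -E.
Qed.

End Zeros.

Section Cancellation.

Variables (K : comNzSemiRingType) (n : nat) (x : 'I_n -> K).
Hypothesis hchar : char1 K.
Hypothesis hinv : nonzero_invertible K.
Hypothesis htot : totally_ordered K.
Variables (R P Q : mpoly K n) (cRP : monom n -> K).
Hypothesis hR : mpoly_nonzero R.
Hypothesis hRP : is_product (mcoef R) (mcoef P) cRP.
Hypothesis hRQ : is_product (mcoef R) (mcoef Q) cRP.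

(* Weights of dominant monomials add up in products, so vanishing of all
   monomials passes from P to Q. *)
Lemma positive_weights_cancel :
  positive_weights x (mcoef P) -> positive_weights x (mcoef Q).
Proof.
move=> HP m Hm; have [a Da] := dominant_exists x hchar htot hR.
have [b Db] := dominant_exists x hchar htot (ex_intro _ m Hm).
have [a' [b' [Eab Da' Db']]] := dominant_split hinv hRP (dominantD hinv hRQ Da Db).
have Eb : wt x b = wt x b'.
  by have := congr1 (wt x) Eab; rewrite !wtD (dominant_wt_eq Da Da') => /addnI.
by apply: leq_trans (dominant_wt_le Db Hm); rewrite Eb; apply: HP; case: Db'.
Qed.

Lemma dominant_enum :
  exists2 A : seq (monom n), uniq A & forall a, a \in A <-> dominant x (mcoef R) a.
Proof.
have [A HAs HA] := classical_filter (dominant x (mcoef R)) (undup (map fst R)).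
exists A; first exact: subseq_uniq HAs (undup_uniq _).
move=> a; rewrite HA mem_undup; split=> [[] //|Da]; split=> //.
by apply: mcoef_neq0_mem; case: Da.
Qed.

(* If Q had a single dominant monomial b, every dominant p of P would satisfy
   D(R) + p \subset D(R) + b, hence p = b; so P could not have two. *)
Lemma two_dominants_cancel : two_dominants x (mcoef P) -> two_dominants x (mcoef Q).
Proof.
move=> [p1 [p2 [Hne Dp1 Dp2]]]; apply: NNPP => Hnot.
have [A HA memA] := dominant_enum.
have [a Da] := dominant_exists x hchar htot hR.
have HA0 : A <> [::] by move=> EA; have := proj2 (memA a) Da; rewrite EA.
have [_ [b [_ _ Db]]] := dominant_split hinv hRQ (dominantD hinv hRP Da Dp1).
have unique_b b' : dominant x (mcoef Q) b' -> b' = b.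
  by move=> Db'; apply: NNPP => Hb'; apply: Hnot; exists b', b.
suff to_b p : dominant x (mcoef P) p -> p = b by case: Hne; rewrite (to_b _ Dp1) (to_b _ Dp2).
move=> Dp; apply: (translate_subset HA HA0) => _ /mapP [a0 /memA Da0 ->].
have [a1 [b1 [-> Da1 Db1]]] := dominant_split hinv hRQ (dominantD hinv hRP Da0 Dp).
by rewrite (unique_b _ Db1); apply: map_f; apply/memA.
Qed.

End Cancellation.

Theorem proposition2p6 (K : comNzSemiRingType) (n : nat)
  (hchar : char1 K) (hinv : nonzero_invertible K) (htot : totally_ordered K)
  (P Q R : mpoly K n) (x : 'I_n -> K) :
  is_zero_of P x -> mpoly_nonzero R -> mpoly_eq (mmul R P) (mmul R Q) ->
  is_zero_of Q x.
Proof.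
move=> HzP hR /functional_extensionality ERPQ.
have hRP := is_product_mmul hchar htot R P.
have hRQ := is_product_mmul hchar htot R Q; rewrite -ERPQ in hRQ.
apply/(zero_ofP x hchar hinv htot); case/(zero_ofP x hchar hinv htot): HzP => HP.
  by left; apply: (positive_weights_cancel (x := x) hchar hinv htot hR hRP hRQ).
by right; apply: (two_dominants_cancel hchar hinv htot hR hRP hRQ).
Qed.
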